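(* Let $X$ and $Y$ be infinite sets with $|X| < |Y|$. Then: (i) every sequence of words that is universal for $\operatorname{Sym}(X)$ is universal for $\operatorname{Sym}(Y)$; (ii) if $2^{\aleph_0} < |X|$, then every sequence of words that is universal for $\operatorname{Sym}(Y)$ is universal for $\operatorname{Sym}(X)$. In particular, if $2^{\aleph_0} < |X| \leq |Y|$, then the sequences universal for $\operatorname{Sym}(X)$ are exactly the sequences universal for $\operatorname{Sym}(Y)$.
   Context: $\operatorname{Sym}(X)$ is the symmetric group on $X$. For an alphabet $A$ (a finite or countable set), $A^+$ is the free semigroup of non-empty words over $A$. A sequence $w_1, w_2, \ldots \in A^+$ is universal for a semigroup $S$ if for every sequence $s_1, s_2, \ldots \in S$ there is a semigroup homomorphism $\phi: A^+ \to S$ with $(w_n)\phi = s_n$ for all $n \geq 1$. *)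

From Stdlib Require Import List.
Import ListNotations.
Set Implicit Arguments.

Definition card_le (X Y : Type) : Prop :=
  exists f : X -> Y, forall x1 x2, f x1 = f x2 -> x1 = x2.

Definition card_lt (X Y : Type) : Prop := card_le X Y /\ ~ card_le Y X.

Definition infinite (X : Type) : Prop :=
  ~ exists l : list X, forall x : X, In x l.

Definition countable (A : Type) : Prop := card_le A nat.

Record Sym (X : Type) : Type := MkSym {
  sfun : X -> X;
  sinv : X -> X;
  sfun_inv : forall x, sfun (sinv x) = x;
  sinv_fun : forall x, sinv (sfun x) = x }.
Arguments sfun {X} _ _.
Arguments sinv {X} _ _.

(** Product in Sym(X), with maps acting on the right as in the paper:
    x (p q) = (x p) q, i.e. first p then q. *)
Definition sym_mul (X : Type) (p q : Sym X) : Sym X.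
Proof.
  refine (@MkSym X (fun x => sfun q (sfun p x)) (fun x => sinv p (sinv q x)) _ _).
  - intro x. rewrite (sfun_inv p). apply (sfun_inv q).
  - intro x. rewrite (sinv_fun q). apply (sinv_fun p).
Defined.

(** The free semigroup A^+ of non-empty words: a first letter and a tail. *)
Definition word (A : Type) : Type := (A * list A)%type.

Definition word_cat (A : Type) (u v : word A) : word A :=
  (fst u, snd u ++ fst v :: snd v).

Definition is_hom (A X : Type) (phi : word A -> Sym X) : Prop :=
  forall u v : word A, phi (word_cat u v) = sym_mul (phi u) (phi v).

(** A sequence of words w_1, w_2, ... (indexed here from 0) is universal
    for Sym(X). *)
Definition universal_sym (A X : Type) (w : nat -> word A) : Prop :=
  forall s : nat -> Sym X,
    exists phi : word A -> Sym X, is_hom phi /\ forall n, phi (w n) = s n.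

From Stdlib Require Import PeanoNat Lia List FinFun Cantor Classical ClassicalEpsilon
  FunctionalExtensionality PropExtensionality ProofIrrelevance.
From mathcomp Require classical_sets.
Import ListNotations.

(* It suffices to solve [w n = s n] separately on the pieces of an
   [s]-invariant partition, since the solutions glue.

   (i) By Zorn's lemma take a maximal disjoint family of invariant pieces of
   size |X|. The rest is invariant of size < |X| (the orbit closure of a copy
   of X would be a new piece), so it can be merged into one piece; every piece
   is then a copy of X, where w is universal.

   (ii) The orbits are countable. Take a maximal disjoint family of countable
   invariant pieces each containing infinitely many orbits of a single
   isomorphism type. The rest contains finitely many orbits of each type, so
   it has at most 2^aleph0 points; since |X| > 2^aleph0 the family has more
   members than there are remaining orbits, and each remaining orbit joins
   its own member. To solve on such a piece P, solve on P plus |Y| copies of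
   the repeated orbit, a set of size |Y|: the subgroup generated by that
   solution carries P into P plus countably many copies of the orbit, and P
   absorbs these copies equivariantly. *)

(** * Cardinal arithmetic *)

Definition equipotent (X Y : Type) : Prop := exists f : X -> Y, Bijective f.

Lemma card_le_refl X : card_le X X.
Proof. exists (fun x => x). auto. Qed.

Lemma card_le_trans X Y Z : card_le X Y -> card_le Y Z -> card_le X Z.
Proof. intros [f Hf] [g Hg]. exists (fun x => g (f x)). auto. Qed.

Lemma equipotent_card_le X Y : equipotent X Y -> card_le X Y.
Proof.
  intros [f [g [Hgf _]]]. exists f. intros a b E.
  rewrite <- (Hgf a), <- (Hgf b), E. reflexivity.
Qed.

Lemma equipotent_sym X Y : equipotent X Y -> equipotent Y X.
Proof. intros [f [g [H1 H2]]]. exists g, f. auto. Qed.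

Lemma bijective_of_inj_surj {X Y} (f : X -> Y) : Injective f -> Surjective f -> Bijective f.
Proof.
  intros Hi Hs. destruct (choice (fun y x => f x = y) Hs) as [g Hg].
  exists g. split; [intro x; apply Hi, Hg | exact Hg].
Qed.

Lemma injective_left_inverse {X Y} (f : X -> Y) :
  inhabited X -> Injective f -> exists r : Y -> X, forall x, r (f x) = x.
Proof.
  intros [x0] Hf. exists (fun y => epsilon (inhabits x0) (fun x => f x = y)).
  intro x. apply Hf. apply (epsilon_spec (inhabits x0) (fun x' => f x' = f x)). exists x; auto.
Qed.

Lemma sig_ext {T} (Q : T -> Prop) (a b : {y | Q y}) : proj1_sig a = proj1_sig b -> a = b.
Proof. intro E. apply eq_sig_hprop; [intros; apply proof_irrelevance | exact E]. Qed.

Lemma card_le_sig Y (P : Y -> Prop) : card_le {y | P y} Y.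
Proof. exists (@proj1_sig _ _). intros a b. apply sig_ext. Qed.

Lemma card_le_sig_incl Y (P Q : Y -> Prop) :
  (forall y, P y -> Q y) -> card_le {y | P y} {y | Q y}.
Proof.
  intro H. exists (fun z => exist _ (proj1_sig z) (H _ (proj2_sig z))).
  intros a b E. apply sig_ext. exact (f_equal (@proj1_sig _ _) E).
Qed.

Lemma card_le_sig_or Y (P Q : Y -> Prop) :
  card_le {y | P y \/ Q y} ({y | P y} + {y | Q y}).
Proof.
  assert (H : forall z : {y | P y \/ Q y}, exists v : {y | P y} + {y | Q y},
    match v with inl a => proj1_sig a = proj1_sig z | inr b => proj1_sig b = proj1_sig z end).
  { intros [y [Py|Qy]]; [exists (inl (exist _ y Py)) | exists (inr (exist _ y Qy))]; reflexivity. }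
  destruct (choice _ H) as [c Hc]. exists c. intros a b E. apply sig_ext.
  pose proof (Hc a) as Ha. pose proof (Hc b) as Hb. rewrite E in Ha. destruct (c b); congruence.
Qed.

Lemma card_le_image X Y (f : X -> Y) : card_le {y | exists x, f x = y} X.
Proof.
  assert (H : forall z : {y | exists x, f x = y}, exists x, f x = proj1_sig z)
    by (intros [y Hy]; exact Hy).
  destruct (choice _ H) as [c Hc]. exists c. intros a b E. apply sig_ext.
  rewrite <- Hc, <- (Hc b), E. reflexivity.
Qed.

Lemma card_le_sum A A' B B' : card_le A A' -> card_le B B' -> card_le (A + B) (A' + B').
Proof.
  intros [f Hf] [g Hg]. exists (fun z => match z with inl a => inl (f a) | inr b => inr (g b) end).
  intros [a|b] [a'|b'] E; try discriminate; injection E as E; f_equal; auto.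
Qed.

Lemma card_le_prod A A' B B' : card_le A A' -> card_le B B' -> card_le (A * B) (A' * B').
Proof.
  intros [f Hf] [g Hg]. exists (fun p => (f (fst p), g (snd p))).
  intros [a b] [a' b'] E. injection E as E1 E2. f_equal; auto.
Qed.

Lemma card_le_nat_prod_nat : card_le (nat * nat) nat.
Proof. exists Cantor.to_nat. exact Cantor.to_nat_inj. Qed.

Lemma card_le_nat_sum_nat : card_le (nat + nat) nat.
Proof.
  exists (fun z => match z with inl n => 2 * n | inr n => S (2 * n) end).
  intros [a|a] [b|b] E; try (exfalso; lia); f_equal; lia.
Qed.

Lemma card_le_sum_diag X : card_le (X + X) (X * nat).
Proof.
  exists (fun z => match z with inl a => (a, 0) | inr b => (b, 1) end).
  intros [a|b] [a'|b'] E; try discriminate; injection E as E; f_equal; auto.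
Qed.

Theorem card_le_antisym X Y : card_le X Y -> card_le Y X -> equipotent X Y.
Proof.
  intros [f Hf] [g Hg].
  (* [C] is the set of points of X reachable from X \ g(Y) by iterating g o f;
     the bijection is f on C and the inverse of g elsewhere. *)
  set (Cn := fix Cn (n : nat) (x : X) : Prop :=
         match n with 0 => ~ exists y, g y = x
                    | S n => exists x', Cn n x' /\ g (f x') = x end).
  set (C := fun x => exists n, Cn n x).
  set (ginv := fun x => epsilon (inhabits (f x)) (fun y => g y = x)).
  assert (Hginv : forall x, ~ C x -> g (ginv x) = x).
  { intros x nC. apply (epsilon_spec (inhabits (f x)) (fun y => g y = x)).
    apply NNPP; intro H. apply nC. exists 0. exact H. }
  set (h := fun x => if excluded_middle_informative (C x) then f x else ginv x).
  exists h. apply bijective_of_inj_surj.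
  - intros a b. unfold h.
    destruct (excluded_middle_informative (C a)) as [Ca|Ca];
    destruct (excluded_middle_informative (C b)) as [Cb|Cb]; intro E.
    + auto.
    + exfalso. apply Cb. destruct Ca as [n Hn]. exists (S n), a. rewrite E. auto.
    + exfalso. apply Ca. destruct Cb as [n Hn]. exists (S n), b. rewrite <- E. auto.
    + rewrite <- (Hginv a Ca), <- (Hginv b Cb), E. reflexivity.
  - intro y. destruct (classic (C (g y))) as [[[|n] Hn]|Cg].
    + exfalso. apply Hn. exists y; reflexivity.
    + destruct Hn as [x' [Hx' E]]. exists x'. unfold h.
      destruct (excluded_middle_informative (C x')) as [_|nC].
      * apply Hg. exact E.
      * exfalso; apply nC; exists n; exact Hx'.
    + exists (g y). unfold h. destruct (excluded_middle_informative (C (g y))) as [c|_].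
      * contradiction.
      * apply Hg. apply Hginv. exact Cg.
Qed.

Section Zorn.
Import classical_sets.
Local Open Scope classical_set_scope.

Lemma zorn_sets (T : Type) (P : (T -> Prop) -> Prop) :
  (forall F : (T -> Prop) -> Prop, (forall A, F A -> P A) ->
     (forall A B, F A -> F B -> (forall x, A x -> B x) \/ (forall x, B x -> A x)) ->
     P (fun x => exists A, F A /\ A x)) ->
  exists A, P A /\ forall B, (forall x, A x -> B x) -> P B -> forall x, B x -> A x.
Proof.
  intros H.
  destruct (@Zorn_bigcup T P) as [A [PA HA]].
  - intros F FP Ftot.
    assert (E : (\bigcup_(X in F) X) = (fun x => exists A, F A /\ A x)).
    { apply functional_extensionality; intro x; apply propositional_extensionality.
      split; [intros [A FA Ax] | intros [A [FA Ax]]]; exists A; auto. }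
    rewrite E. apply H; [exact FP | exact Ftot].
  - exists A. split; [exact PA|]. intros B AB PB x Bx.
    apply NNPP; intro nAx. apply (HA B); [|exact PB].
    split; [exact AB|]. intro BA. apply nAx. apply BA. exact Bx.
Qed.
End Zorn.

Theorem card_le_total X Y : card_le X Y \/ card_le Y X.
Proof.
  (* A maximal partial bijection between X and Y is total on one side. *)
  set (P := fun G : X * Y -> Prop =>
     (forall x y y', G (x,y) -> G (x,y') -> y = y') /\
     (forall x x' y, G (x,y) -> G (x',y) -> x = x')).
  destruct (@zorn_sets (X*Y) P) as [G [[G1 G2] HG]].
  - intros F FP Ftot. split.
    + intros x y y' [A [FA Ha]] [B [FB Hb]].
      destruct (Ftot A B FA FB) as [S|S];
        [apply ((proj1 (FP B FB)) x); auto | apply ((proj1 (FP A FA)) x); auto].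
    + intros x x' y [A [FA Ha]] [B [FB Hb]].
      destruct (Ftot A B FA FB) as [S|S];
        [apply ((proj2 (FP B FB)) x x' y); auto | apply ((proj2 (FP A FA)) x x' y); auto].
  - destruct (classic (forall x, exists y, G (x,y))) as [Hx|Hx].
    { left. destruct (choice (fun x y => G (x,y)) Hx) as [f Hf].
      exists f. intros a b E. apply (G2 a b (f a)); auto. rewrite E; auto. }
    destruct (classic (forall y, exists x, G (x,y))) as [Hy|Hy].
    { right. destruct (choice (fun y x => G (x,y)) Hy) as [f Hf].
      exists f. intros a b E. apply (G1 (f a) a b); auto. rewrite E; auto. }
    exfalso. apply not_all_ex_not in Hx as [x0 Hx0]. apply not_all_ex_not in Hy as [y0 Hy0].
    set (G' := fun p => G p \/ p = (x0,y0)).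
    assert (PG' : P G').
    { split.
      - intros x y y' [H|H] [H'|H']; try (injection H'; intros; subst);
          try (injection H; intros; subst); eauto; exfalso; apply Hx0; eauto.
      - intros x x' y [H|H] [H'|H']; try (injection H'; intros; subst);
          try (injection H; intros; subst); eauto; exfalso; apply Hy0; eauto. }
    apply Hx0. exists y0. apply (HG G'); [intros; left; auto | exact PG' | right; auto].
Qed.

Definition uncovered {Y} (F : (Y -> Prop) -> Prop) (y : Y) : Prop := forall S, F S -> ~ S y.

Lemma not_uncovered {Y} (F : (Y -> Prop) -> Prop) y : ~ uncovered F y -> exists S, F S /\ S y.
Proof.
  intro H. apply NNPP; intro H'. apply H. intros S FS Sy. apply H'. exists S; auto.
Qed.

Lemma maximal_disjoint_family (Y : Type) (Good : (Y -> Prop) -> Prop) :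
  exists F : (Y -> Prop) -> Prop, (forall S, F S -> Good S) /\
    (forall S T y, F S -> F T -> S y -> T y -> S = T) /\
    (forall C, Good C -> (forall y, C y -> uncovered F y) -> forall y, ~ C y).
Proof.
  set (P := fun F : (Y -> Prop) -> Prop => (forall S, F S -> Good S) /\
    (forall S T y, F S -> F T -> S y -> T y -> S = T)).
  destruct (@zorn_sets (Y -> Prop) P) as [F [[F1 F2] HF]].
  - intros Fs FP Ftot. split.
    + intros S [A [FA AS]]. exact (proj1 (FP A FA) S AS).
    + intros S T y [A [FA AS]] [B [FB BT]] Sy Ty.
      destruct (Ftot A B FA FB) as [H|H];
        [apply (proj2 (FP B FB) S T y) | apply (proj2 (FP A FA) S T y)]; auto.
  - exists F. split; [exact F1|]. split; [exact F2|].
    intros C GC HC y Cy.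
    set (F' := fun S => F S \/ S = C).
    assert (PF' : P F').
    { split.
      - intros S [H| ->]; auto.
      - intros S T z [HS| ->] [HT| ->] Sz Tz.
        + eapply F2; eauto.
        + exfalso. apply (HC z Tz S HS Sz).
        + exfalso. apply (HC z Sz T HT Tz).
        + reflexivity. }
    assert (FC : F C) by (apply (HF F' (fun S H => or_introl H) PF'); right; reflexivity).
    exact (HC y Cy C FC Cy).
Qed.

Lemma infinite_inhabited X : infinite X -> inhabited X.
Proof.
  intro HX. apply NNPP; intro H. apply HX. exists []. intro x. apply H. exact (inhabits x).
Qed.

Lemma infinite_sequence X (D : X -> Prop) :
  (forall l : list X, exists x, D x /\ ~ In x l) ->
  exists d : nat -> X, Injective d /\ forall n, D (d n).
Proof.
  intro H. destruct (choice _ H) as [c Hc].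
  set (L := fix L n := match n with 0 => [] | S n => c (L n) :: L n end).
  exists (fun n => c (L n)). split; [|intro n; apply Hc].
  assert (Hin : forall n m, n < m -> In (c (L n)) (L m)).
  { intros n m; induction m; intro Hnm; [lia|]. simpl.
    destruct (Nat.eq_dec n m) as [->|]; [left; auto | right; apply IHm; lia]. }
  intros a b E. destruct (Nat.lt_trichotomy a b) as [Hab|[Hab|Hab]]; auto; exfalso.
  - apply (proj2 (Hc (L b))). rewrite <- E. apply Hin; auto.
  - apply (proj2 (Hc (L a))). rewrite E. apply Hin; auto.
Qed.

Lemma infinite_card_le_nat X : infinite X -> card_le nat X.
Proof.
  intro HX. destruct (infinite_sequence X (fun _ => True)) as [d [Hd _]]; [|exists d; exact Hd].
  intro l. apply NNPP; intro H. apply HX. exists l. intro x.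
  apply NNPP; intro Hx. apply H. exists x. auto.
Qed.

Lemma infinite_card_le X Y : card_le X Y -> infinite X -> infinite Y.
Proof.
  intros [f Hf] HX [l Hl].
  destruct (injective_left_inverse f (infinite_inhabited X HX) Hf) as [r Hr].
  apply HX. exists (map r l). intro x. rewrite <- (Hr x). apply in_map, Hl.
Qed.

Section Absorption.
Variables (X : Type) (HX : infinite X).
Variable F : (X -> Prop) -> Prop.
Variable enum : (X -> Prop) -> nat -> X.
Hypothesis enum_inj : forall S, F S -> Injective (enum S).
Hypothesis enum_onto : forall S x, F S -> S x <-> exists n, enum S n = x.
Hypothesis F_disj : forall S T y, F S -> F T -> S y -> T y -> S = T.
Hypothesis F_max : forall d : nat -> X, Injective d -> ~ forall n, uncovered F (d n).

Lemma enum_eq S T n m : F S -> F T -> enum S n = enum T m -> S = T /\ n = m.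
Proof.
  intros FS FT E.
  assert (ST : S = T).
  { apply (F_disj S T (enum S n) FS FT); [|rewrite E];
      apply enum_onto; eauto. }
  subst T. split; [reflexivity | exact (enum_inj S FS _ _ E)].
Qed.

Lemma uncovered_finite : exists l, forall x, uncovered F x -> In x l.
Proof.
  apply NNPP; intro Hn.
  destruct (infinite_sequence X (uncovered F)) as [d [Hd Hdu]]; [|exact (F_max d Hd Hdu)].
  intro l. apply NNPP; intro H. apply Hn. exists l. intros x Hx.
  apply NNPP; intro H'. apply H. exists x; auto.
Qed.

Lemma absorption_of_family : card_le (X * nat) X.
Proof.
  destruct (infinite_inhabited X HX) as [x0].
  destruct uncovered_finite as [l Hl].
  destruct (classic (exists S0, F S0)) as [[S0 FS0]|nF].
  2:{ exfalso. apply HX. exists l. intro x. apply Hl. intros S FS _. apply nF; eauto. }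
  assert (Hb : forall x, exists p : (X -> Prop) * nat,
    ~ uncovered F x -> F (fst p) /\ enum (fst p) (snd p) = x).
  { intro x. destruct (classic (uncovered F x)) as [u|Cx]; [exists (S0, 0); tauto|].
    destruct (not_uncovered F x Cx) as [S [FS Sx]].
    destruct (proj1 (enum_onto S x FS) Sx) as [n En]. exists (S, n); auto. }
  destruct (choice _ Hb) as [b Hb'].
  assert (Hj : forall x, exists j, uncovered F x -> nth j l x0 = x).
  { intro x. destruct (classic (uncovered F x)) as [u|c]; [|exists 0; tauto].
    destruct (In_nth l x x0 (Hl x u)) as [j [_ Ej]]. exists j; auto. }
  destruct (choice _ Hj) as [j Hj'].
  (* Covered points go to even positions of their own block, the finitely
     many others to odd positions of the block [S0]. *)
  exists (fun p : X * nat => let (x, k) := p in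
     if excluded_middle_informative (uncovered F x)
     then enum S0 (S (2 * Cantor.to_nat (j x, k)))
     else enum (fst (b x)) (2 * Cantor.to_nat (snd (b x), k))).
  intros [a k] [a' k'].
  destruct (excluded_middle_informative (uncovered F a)) as [ua|ca];
  destruct (excluded_middle_informative (uncovered F a')) as [ua'|ca']; intro E;
  [ | destruct (Hb' a' ca') as [Fa' Ea'] | destruct (Hb' a ca) as [Fa Ea]
  | destruct (Hb' a ca) as [Fa Ea]; destruct (Hb' a' ca') as [Fa' Ea'] ];
  apply enum_eq in E as [E1 E2]; auto; try lia.
  - assert (E3 : (j a, k) = (j a', k')) by (apply Cantor.to_nat_inj; lia).
    injection E3 as E3 ->. rewrite <- (Hj' a ua), <- (Hj' a' ua'), E3. reflexivity.
  - assert (E3 : (snd (b a), k) = (snd (b a'), k')) by (apply Cantor.to_nat_inj; lia).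
    injection E3 as E3 ->. rewrite <- Ea, <- Ea', E1, E3. reflexivity.
Qed.

End Absorption.

Theorem infinite_card_le_prod_nat X : infinite X -> card_le (X * nat) X.
Proof.
  intro HX. destruct (infinite_inhabited X HX) as [x0].
  destruct (maximal_disjoint_family X
    (fun S => exists e : nat -> X, Injective e /\ forall x, S x <-> exists n, e n = x))
    as [F [F_enum [F_disj F_max]]].
  assert (He : forall S, exists e : nat -> X,
    F S -> Injective e /\ forall x, S x <-> exists n, e n = x).
  { intro S. destruct (classic (F S)) as [FS|nFS]; [|exists (fun _ => x0); tauto].
    destruct (F_enum S FS) as [e He]. exists e; auto. }
  destruct (choice _ He) as [enum Henum].
  apply (absorption_of_family X HX F enum); auto.
  - intros S FS. apply Henum, FS.
  - intros S x FS. apply Henum, FS.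
  - intros d Hd Hu. apply (F_max (fun x => exists n, d n = x)) with (d 0).
    + exists d. split; [exact Hd | reflexivity].
    + intros y [n <-]. apply Hu.
    + exists 0. reflexivity.
Qed.

Lemma infinite_card_le_sum X : infinite X -> card_le (X + X) X.
Proof.
  intro HX. apply (card_le_trans _ (X * nat));
    [apply card_le_sum_diag | apply infinite_card_le_prod_nat, HX].
Qed.

(** * Permutations, words and solutions *)

Lemma Sym_eq {X} (p q : Sym X) : (forall x, sfun p x = sfun q x) -> p = q.
Proof.
  intro H.
  assert (Hi : forall x, sinv p x = sinv q x).
  { intro x. rewrite <- (sinv_fun q (sinv p x)), <- H, sfun_inv. reflexivity. }
  destruct p as [f g H1 H2], q as [f' g' H1' H2']. simpl in *.
  assert (f = f') by (apply functional_extensionality; auto).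
  assert (g = g') by (apply functional_extensionality; auto).
  subst. f_equal; apply proof_irrelevance.
Qed.

Definition id_sym (X : Type) : Sym X :=
  @MkSym X (fun x => x) (fun x => x) (fun x => eq_refl) (fun x => eq_refl).

Definition conj_sym {P Q} (b : P -> Q) (b' : Q -> P) (Hb : forall x, b' (b x) = x)
  (Hb' : forall y, b (b' y) = y) (p : Sym P) : Sym Q.
Proof.
  refine (@MkSym Q (fun y => b (sfun p (b' y))) (fun y => b (sinv p (b' y))) _ _).
  - intro y. rewrite Hb, sfun_inv. apply Hb'.
  - intro y. rewrite Hb, sinv_fun. apply Hb'.
Defined.

Definition sub_sym {Y} (Q : Y -> Prop) (p : Sym Y) (H1 : forall y, Q y -> Q (sfun p y))
  (H2 : forall y, Q y -> Q (sinv p y)) : Sym {y | Q y}.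
Proof.
  refine (@MkSym _ (fun z => exist _ (sfun p (proj1_sig z)) (H1 _ (proj2_sig z)))
                   (fun z => exist _ (sinv p (proj1_sig z)) (H2 _ (proj2_sig z))) _ _).
  - intros [z Hz]. apply sig_ext. apply sfun_inv.
  - intros [z Hz]. apply sig_ext. apply sinv_fun.
Defined.

Definition sum_sym {T1 T2} (p : Sym T1) (q : Sym T2) : Sym (T1 + T2).
Proof.
  refine (@MkSym _
    (fun z => match z with inl x => inl (sfun p x) | inr y => inr (sfun q y) end)
    (fun z => match z with inl x => inl (sinv p x) | inr y => inr (sinv q y) end) _ _).
  - intros [x|y]; f_equal; apply sfun_inv.
  - intros [x|y]; f_equal; apply sinv_fun.
Defined.

Definition prod_sym {N O} (q : Sym O) : Sym (N * O).
Proof.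
  refine (@MkSym _ (fun z => (fst z, sfun q (snd z))) (fun z => (fst z, sinv q (snd z))) _ _).
  - intros [a o]; simpl; rewrite sfun_inv; auto.
  - intros [a o]; simpl; rewrite sinv_fun; auto.
Defined.

Definition invariant {K Y} (t : K -> Sym Y) (S : Y -> Prop) : Prop :=
  forall k y, S y -> S (sfun (t k) y) /\ S (sinv (t k) y).

Lemma invariant_sfun {K Y} {t : K -> Sym Y} {S : Y -> Prop} :
  invariant t S -> forall k y, S y -> S (sfun (t k) y).
Proof. intros H k y Sy. exact (proj1 (H k y Sy)). Qed.

Lemma invariant_sinv {K Y} {t : K -> Sym Y} {S : Y -> Prop} :
  invariant t S -> forall k y, S y -> S (sinv (t k) y).
Proof. intros H k y Sy. exact (proj2 (H k y Sy)). Qed.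

Definition restrict_sym {K Y} (t : K -> Sym Y) (S : Y -> Prop) (HS : invariant t S) (k : K)
  : Sym {y | S y} :=
  sub_sym S (t k) (fun y Sy => proj1 (HS k y Sy)) (fun y Sy => proj2 (HS k y Sy)).

Section WordEvaluation.
Variable A : Type.

Definition word_eval {X} (f : A -> Sym X) (u : word A) : Sym X :=
  fold_left (fun p b => sym_mul p (f b)) (snd u) (f (fst u)).

Lemma fold_sym_mul {X} (f : A -> Sym X) l p q :
  fold_left (fun p b => sym_mul p (f b)) l (sym_mul p q)
  = sym_mul p (fold_left (fun p b => sym_mul p (f b)) l q).
Proof.
  revert q. induction l as [|b l IH]; intro q; simpl; auto.
  rewrite <- IH. f_equal. apply Sym_eq. reflexivity.
Qed.

Lemma word_eval_hom {X} (f : A -> Sym X) : is_hom (word_eval f).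
Proof.
  intros [a l] [b m]. unfold word_eval, word_cat; simpl.
  rewrite fold_left_app. apply fold_sym_mul.
Qed.

Lemma hom_word_eval {X} (phi : word A -> Sym X) :
  is_hom phi -> forall u, phi u = word_eval (fun a => phi (a, [])) u.
Proof.
  intros Hh [a l]. revert a. induction l as [|b l IH]; intro a; [reflexivity|].
  unfold word_eval; simpl. rewrite fold_sym_mul.
  change (a, b :: l) with (word_cat (a, []) (b, l)). rewrite Hh. f_equal. apply IH.
Qed.

Lemma word_eval_apply {X} (f : A -> Sym X) a l x :
  sfun (word_eval f (a, l)) x = fold_left (fun y b => sfun (f b) y) l (sfun (f a) x).
Proof.
  unfold word_eval; simpl. generalize (f a). revert x.
  induction l as [|b l IH]; intros x p; simpl; auto. rewrite IH. reflexivity.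
Qed.

Lemma word_eval_preserves {X} (f : A -> Sym X) (R : X -> Prop) :
  invariant f R -> invariant (word_eval f) R.
Proof.
  intros Hf [a l]. unfold word_eval; simpl. generalize (f a) (Hf a). clear a.
  induction l as [|b l IH]; intros p Hp; simpl; auto.
  apply IH. intros y Ry. simpl. split.
  - apply Hf, Hp, Ry.
  - apply Hp, Hf, Ry.
Qed.

Definition solvable (w : nat -> word A) (P : Type) (s : nat -> Sym P) : Prop :=
  exists f : A -> Sym P, forall n, word_eval f (w n) = s n.

Lemma universal_symE (w : nat -> word A) P : universal_sym P w <-> forall s, solvable w P s.
Proof.
  split.
  - intros H s. destruct (H s) as [phi [Hh Hw]]. exists (fun a => phi (a, [])).
    intro n. rewrite <- hom_word_eval; auto.
  - intros H s. destruct (H s) as [f Hf]. exists (word_eval f). split; auto. apply word_eval_hom.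
Qed.

Definition solvable_on (w : nat -> word A) {Y} (s : nat -> Sym Y) (S : Y -> Prop) : Prop :=
  forall HS : invariant s S, solvable w {y | S y} (restrict_sym s S HS).

Lemma solvable_of_empty (w : nat -> word A) P (s : nat -> Sym P) : (P -> False) -> solvable w P s.
Proof. intro H. exists (fun _ => id_sym P). intro n. apply Sym_eq. intro x. destruct (H x). Qed.

Section Restriction.
Variables (P Q : Type) (f : A -> Sym Q) (i : P -> Q) (r : Q -> P).
Hypothesis Hri : forall x, r (i x) = x.
Hypothesis Hf : forall a x,
  (exists x', sfun (f a) (i x) = i x') /\ (exists x', sinv (f a) (i x) = i x').

Definition pullback_sym (a : A) : Sym P.
Proof.
  refine (@MkSym P (fun x => r (sfun (f a) (i x))) (fun x => r (sinv (f a) (i x))) _ _).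
  - intro x. destruct (proj2 (Hf a x)) as [x' E]. rewrite E, Hri, <- E, sfun_inv. apply Hri.
  - intro x. destruct (proj1 (Hf a x)) as [x' E]. rewrite E, Hri, <- E, sinv_fun. apply Hri.
Defined.

Lemma pullback_word_eval u x : i (sfun (word_eval pullback_sym u) x) = sfun (word_eval f u) (i x).
Proof.
  destruct u as [a l]. rewrite !word_eval_apply. simpl.
  destruct (proj1 (Hf a x)) as [x0 ->]. rewrite Hri.
  revert x0. induction l as [|b l IH]; intro x0; simpl; auto.
  destruct (proj1 (Hf b x0)) as [x1 ->]. rewrite Hri. apply IH.
Qed.

Lemma solvable_pullback (w : nat -> word A) (s : nat -> Sym P) :
  (forall n x, sfun (word_eval f (w n)) (i x) = i (sfun (s n) x)) -> solvable w P s.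
Proof.
  intro Hw. exists pullback_sym. intro n. apply Sym_eq. intro x.
  rewrite <- (Hri (sfun (word_eval pullback_sym (w n)) x)), pullback_word_eval, Hw, Hri.
  reflexivity.
Qed.
End Restriction.

Lemma solvable_of_equipotent (w : nat -> word A) P Q (s : nat -> Sym P) :
  equipotent P Q -> universal_sym Q w -> solvable w P s.
Proof.
  intros [b [b' [Hb Hb']]] HU.
  destruct (proj1 (universal_symE w Q) HU (fun n => conj_sym b b' Hb Hb' (s n))) as [f Hf].
  apply (solvable_pullback P Q f b b' Hb).
  - intros a x. split; [exists (b' (sfun (f a) (b x))) | exists (b' (sinv (f a) (b x)))];
      rewrite Hb'; reflexivity.
  - intros n x. rewrite Hf. simpl. rewrite Hb. reflexivity.
Qed.

Lemma universal_sym_equipotent (w : nat -> word A) P Q :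
  equipotent P Q -> universal_sym Q w -> universal_sym P w.
Proof. intros B HU. apply universal_symE. intro s. exact (solvable_of_equipotent w P Q s B HU). Qed.

End WordEvaluation.

(** * Orbits of a family of permutations *)

Section Closure.
Variables (K Y : Type) (t : K -> Sym Y).

(* A list of (generator, sign) pairs is a word in the free group on [K],
   acting through [t]; the head of the list acts last. *)
Fixpoint fg_act (g : list (K * bool)) (y : Y) : Y :=
  match g with
  | [] => y
  | (k, b) :: g => (if b then sfun (t k) else sinv (t k)) (fg_act g y)
  end.

Definition fg_inv (g : list (K * bool)) : list (K * bool) :=
  rev (map (fun p => (fst p, negb (snd p))) g).

Lemma fg_act_app g1 g2 y : fg_act (g1 ++ g2) y = fg_act g1 (fg_act g2 y).
Proof. induction g1 as [|[k b] g1 IH]; simpl; auto. rewrite IH; auto. Qed.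

Lemma fg_act_inv g y : fg_act (fg_inv g) (fg_act g y) = y.
Proof.
  induction g as [|[k b] g IH]; simpl; auto. unfold fg_inv in *. simpl.
  rewrite fg_act_app. simpl. destruct b; simpl; [rewrite sinv_fun | rewrite sfun_inv]; auto.
Qed.

Lemma fg_act_preserves (R : Y -> Prop) : invariant t R -> forall g y, R y -> R (fg_act g y).
Proof.
  intros HR g y Ry. induction g as [|[k b] g IH]; simpl; auto.
  destruct b; apply HR, IH.
Qed.

Definition closure (B : Y -> Prop) (y : Y) : Prop := exists g x, B x /\ y = fg_act g x.

Lemma closure_incl B y : B y -> closure B y.
Proof. intro H. exists [], y. auto. Qed.

Lemma closure_invariant B : invariant t (closure B).
Proof.
  intros k y [g [x [Bx ->]]]. split; [exists ((k,true)::g) | exists ((k,false)::g)]; eauto.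
Qed.

Lemma closure_min B (R : Y -> Prop) :
  (forall y, B y -> R y) -> invariant t R -> forall y, closure B y -> R y.
Proof. intros HB HR y [g [x [Bx ->]]]. apply fg_act_preserves; auto. Qed.

Definition orbit (y z : Y) : Prop := exists g, z = fg_act g y.

Lemma orbit_refl y : orbit y y.
Proof. exists []. reflexivity. Qed.

Lemma orbit_fg_act g y : orbit y (fg_act g y).
Proof. exists g. reflexivity. Qed.

Lemma orbit_eq y z : orbit y z -> orbit z = orbit y.
Proof.
  intros [g ->].
  apply functional_extensionality; intro u; apply propositional_extensionality; split.
  - intros [g' ->]. exists (g' ++ g). symmetry. apply fg_act_app.
  - intros [g' ->]. exists (g' ++ fg_inv g). rewrite fg_act_app, fg_act_inv. auto.
Qed.

Lemma orbit_sym y z : orbit y z -> orbit z y.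
Proof. intro H. rewrite (orbit_eq y z H). apply orbit_refl. Qed.

Lemma orbit_trans y z u : orbit y z -> orbit z u -> orbit y u.
Proof. intros H1 H2. rewrite <- (orbit_eq y z H1). exact H2. Qed.

Lemma orbit_meet g g' y z : fg_act g y = fg_act g' z -> orbit y z.
Proof.
  intro E. exists (fg_inv g' ++ g). rewrite fg_act_app, E, fg_act_inv. reflexivity.
Qed.

Lemma orbit_invariant y : invariant t (orbit y).
Proof. intros k z [g ->]. split; [exists ((k,true)::g) | exists ((k,false)::g)]; reflexivity. Qed.

(* Points of the same type have isomorphic orbits. *)
Definition same_type (y z : Y) : Prop :=
  forall g g', fg_act g y = fg_act g' y <-> fg_act g z = fg_act g' z.

Section Coding.
Variables (e : K -> nat) (He : Injective e).

Fixpoint fg_code (g : list (K * bool)) : nat :=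
  match g with
  | [] => 0
  | (k, b) :: g => S (Cantor.to_nat (Cantor.to_nat (e k, if b then 1 else 0), fg_code g))
  end.

Lemma fg_code_inj : Injective fg_code.
Proof.
  intro g. induction g as [|[k b] g IH]; intros [|[k' b'] g'] E; cbn [fg_code] in E;
    try discriminate; auto.
  apply eq_add_S, Cantor.to_nat_inj in E.
  pose proof (f_equal fst E) as E1. pose proof (f_equal snd E) as E2. cbn [fst snd] in E1, E2.
  apply Cantor.to_nat_inj in E1.
  pose proof (f_equal snd E1) as E3. apply (f_equal fst) in E1. cbn [fst snd] in E1, E3.
  apply He in E1. apply IH in E2.
  subst. destruct b, b'; try discriminate; auto.
Qed.

End Coding.

Lemma closure_card_le B : card_le K nat -> card_le {y | closure B y} ({x | B x} * nat).
Proof.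
  intros [e He].
  assert (H : forall z : {y | closure B y}, exists p : {x | B x} * nat,
     exists g, snd p = fg_code e g /\ proj1_sig z = fg_act g (proj1_sig (fst p))).
  { intros [y [g [x [Bx E]]]]. exists (exist _ x Bx, fg_code e g), g. auto. }
  destruct (choice _ H) as [c Hc]. exists c. intros a b E.
  destruct (Hc a) as [g1 [E1 F1]]. destruct (Hc b) as [g2 [E2 F2]].
  rewrite E in E1, F1. rewrite E1 in E2. apply (fg_code_inj e He) in E2. subst g2.
  apply sig_ext. rewrite F1, F2. reflexivity.
Qed.

Lemma orbit_card_le y : card_le K nat -> card_le {z | orbit y z} nat.
Proof.
  intro HK. apply (card_le_trans _ {z | closure (fun u => u = y) z}).
  - apply card_le_sig_incl. intros z [g ->]. exists g, y. auto.
  - apply (card_le_trans _ _ _ (closure_card_le _ HK)).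
    exists snd. intros [[u ->] n] [[u' ->] n'] E. simpl in E. subst. reflexivity.
Qed.

End Closure.

Lemma fg_act_restrict K Y (t : K -> Sym Y) S (HS : invariant t S) g z :
  proj1_sig (fg_act K _ (restrict_sym t S HS) g z) = fg_act K Y t g (proj1_sig z).
Proof. induction g as [|[k [|]] g IH]; simpl; congruence. Qed.

Lemma orbit_restrict K Y (t : K -> Sym Y) S (HS : invariant t S) (a b : {y | S y}) :
  orbit K _ (restrict_sym t S HS) a b -> orbit K Y t (proj1_sig a) (proj1_sig b).
Proof. intros [g ->]. exists g. apply fg_act_restrict. Qed.

Lemma same_type_restrict K Y (t : K -> Sym Y) S (HS : invariant t S) (a b : {y | S y}) :
  same_type K Y t (proj1_sig a) (proj1_sig b) -> same_type K _ (restrict_sym t S HS) a b.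
Proof.
  intros H g g'. split; intro E; apply sig_ext; rewrite !fg_act_restrict;
    apply (f_equal (@proj1_sig _ _)) in E; rewrite !fg_act_restrict in E; apply H, E.
Qed.

(** * Solving on the pieces of an invariant partition *)

Section Gluing.
Variables (A Y I : Type) (w : nat -> word A) (pi : Y -> I) (s : nat -> Sym Y).
Hypothesis pi_inv : forall n y, pi (sfun (s n) y) = pi y.

Lemma fiber_invariant i : invariant s (fun y => pi y = i).
Proof.
  intros n y <-. split; [apply pi_inv|].
  rewrite <- (pi_inv n (sinv (s n) y)), sfun_inv. reflexivity.
Qed.

Lemma fiber_proj (g : forall j, {y | pi y = j} -> {y | pi y = j}) i (z : {y | pi y = i}) :
  proj1_sig (g i z) = proj1_sig (g (pi (proj1_sig z)) (exist _ (proj1_sig z) eq_refl)).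
Proof. destruct z as [z0 e]. simpl. subst i. reflexivity. Qed.

Definition glue_sym (f : forall i, A -> Sym {y | pi y = i}) (a : A) : Sym Y.
Proof.
  refine (@MkSym Y (fun y => proj1_sig (sfun (f (pi y) a) (exist _ y eq_refl)))
                   (fun y => proj1_sig (sinv (f (pi y) a) (exist _ y eq_refl))) _ _).
  - intro y. rewrite <- (fiber_proj (fun j => sfun (f j a))), sfun_inv. reflexivity.
  - intro y. rewrite <- (fiber_proj (fun j => sinv (f j a))), sinv_fun. reflexivity.
Defined.

Lemma solvable_of_fibers :
  (forall i, solvable_on A w s (fun y => pi y = i)) -> solvable A w Y s.
Proof.
  intro Hsol.
  set (f := fun i =>
    proj1_sig (constructive_indefinite_description _ (Hsol i (fiber_invariant i)))).
  assert (Hf : forall i n, word_eval A (f i) (w n) = restrict_sym s _ (fiber_invariant i) n).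
  { intro i.
    exact (proj2_sig (constructive_indefinite_description _ (Hsol i (fiber_invariant i)))). }
  exists (glue_sym f). intro n. apply Sym_eq. intro y.
  assert (L : forall l i (z : {y | pi y = i}),
     fold_left (fun y b => sfun (glue_sym f b) y) l (proj1_sig z)
     = proj1_sig (fold_left (fun z b => sfun (f i b) z) l z)).
  { induction l as [|b l IH]; intros i z; simpl; auto.
    rewrite <- (fiber_proj (fun j => sfun (f j b))). apply IH. }
  pose proof (f_equal (fun p => proj1_sig (sfun p (exist (fun y0 => pi y0 = pi y) y eq_refl)))
    (Hf (pi y) n)) as E.
  simpl in E. destruct (w n) as [a l]. rewrite word_eval_apply in E |- *.
  exact (eq_trans (L l (pi y) _) E).
Qed.
End Gluing.

Lemma solvable_on_ext A (w : nat -> word A) Y (s : nat -> Sym Y) (S T : Y -> Prop) :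
  (forall y, S y <-> T y) -> solvable_on A w s T -> solvable_on A w s S.
Proof.
  intros E HT. replace S with T; [exact HT|].
  apply functional_extensionality; intro y; apply propositional_extensionality. symmetry; apply E.
Qed.

Lemma solvable_of_partition A (w : nat -> word A) Y (s : nat -> Sym Y) (F : (Y -> Prop) -> Prop) :
  (forall y, exists S, F S /\ S y) ->
  (forall S T y, F S -> F T -> S y -> T y -> S = T) ->
  (forall S n y, F S -> S y -> S (sfun (s n) y)) ->
  (forall S, F S -> solvable_on A w s S) -> solvable A w Y s.
Proof.
  intros cover disj inv Hsol.
  set (pi := fun y => epsilon (inhabits (fun _ : Y => False)) (fun S => F S /\ S y)).
  assert (Hpi : forall y, F (pi y) /\ pi y y).
  { intro y. apply (epsilon_spec (inhabits (fun _ : Y => False)) (fun S => F S /\ S y)), cover. }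
  apply (solvable_of_fibers A Y _ w pi s).
  - intros n y. destruct (Hpi y) as [F1 P1]. destruct (Hpi (sfun (s n) y)) as [F2 P2].
    apply (disj _ _ (sfun (s n) y) F2 F1 P2). apply inv; auto.
  - intro S. destruct (classic (F S)) as [FS|nFS].
    + apply (solvable_on_ext A w Y s _ S); [|exact (Hsol S FS)].
      intro y. split.
      * intros <-. apply Hpi.
      * intro Sy. destruct (Hpi y) as [F1 P1]. apply (disj _ _ y F1 FS P1 Sy).
    + intro HS. apply solvable_of_empty. intros [y Hy]. apply nFS. rewrite <- Hy. apply Hpi.
Qed.

Section Extension.
Variables (A : Type) (w : nat -> word A) (Y : Type) (s : nat -> Sym Y).
Variable F : (Y -> Prop) -> Prop.
Hypothesis F_inv : forall S, F S -> invariant s S.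
Hypothesis F_disj : forall S T y, F S -> F T -> S y -> T y -> S = T.

Lemma uncovered_invariant : invariant s (uncovered F).
Proof.
  intros n y Hy. split; intros S FS Sy; apply (Hy S FS).
  - rewrite <- (sinv_fun (s n) y). exact (invariant_sinv (F_inv S FS) n _ Sy).
  - rewrite <- (sfun_inv (s n) y). exact (invariant_sfun (F_inv S FS) n _ Sy).
Qed.

Variable attach : Y -> (Y -> Prop).
Hypothesis attach_F : forall y, uncovered F y -> F (attach y).
Hypothesis attach_inv : forall n y, attach (sfun (s n) y) = attach y.

Definition extend (S : Y -> Prop) (y : Y) : Prop := S y \/ (uncovered F y /\ attach y = S).

Lemma extend_invariant S : F S -> invariant s (extend S).
Proof.
  intros FS n y [Sy|[Uy <-]]; split.
  - left. exact (invariant_sfun (F_inv S FS) n y Sy).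
  - left. exact (invariant_sinv (F_inv S FS) n y Sy).
  - right. split; [apply uncovered_invariant, Uy | apply attach_inv].
  - right. split; [apply uncovered_invariant, Uy|].
    rewrite <- (attach_inv n (sinv (s n) y)), sfun_inv. reflexivity.
Qed.

Lemma solvable_of_extensions :
  (forall S, F S -> solvable_on A w s (extend S)) -> solvable A w Y s.
Proof.
  intro Hsol. apply (solvable_of_partition A w Y s (fun T => exists S, F S /\ T = extend S)).
  - intro y. destruct (classic (uncovered F y)) as [Uy|Cy].
    + exists (extend (attach y)). split; [exists (attach y); auto | right; auto].
    + destruct (not_uncovered F y Cy) as [S [FS Sy]].
      exists (extend S). split; [exists S; auto | left; auto].
  - intros T T' y [S [FS ->]] [S' [FS' ->]] [Sy|[Uy Ay]] [S'y|[Uy' Ay']].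
    + rewrite (F_disj S S' y FS FS' Sy S'y). auto.
    + exfalso. apply (Uy' S FS Sy).
    + exfalso. apply (Uy S' FS' S'y).
    + rewrite <- Ay, <- Ay'. auto.
  - intros T n y [S [FS ->]]. apply (invariant_sfun (extend_invariant S FS)).
  - intros T [S [FS ->]]. apply Hsol, FS.
Qed.
End Extension.

(** * Transfer to larger sets *)

Section Upward.
Variables (X Y : Type) (HX : infinite X) (XY : card_le X Y).
Variables (A : Type) (w : nat -> word A) (HU : universal_sym X w) (s : nat -> Sym Y).

Let good (C : Y -> Prop) := invariant s C /\ equipotent {y | C y} X.

Variable F : (Y -> Prop) -> Prop.
Hypothesis F_good : forall S, F S -> good S.
Hypothesis F_disj : forall S T y, F S -> F T -> S y -> T y -> S = T.
Hypothesis F_max : forall C, good C -> (forall y, C y -> uncovered F y) -> forall y, ~ C y.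

Let F_inv S (FS : F S) : invariant s S := proj1 (F_good S FS).

Lemma uncovered_not_ge : ~ card_le X {y | uncovered F y}.
Proof.
  intros [e He]. destruct (infinite_inhabited X HX) as [x].
  set (B := fun y => exists x, proj1_sig (e x) = y).
  (* The orbit closure of a copy of X among the uncovered points would be a new good piece. *)
  apply (F_max (closure nat Y s B)) with (proj1_sig (e x)); [split| |].
  - apply closure_invariant.
  - apply equipotent_sym, card_le_antisym.
    + exists (fun x => exist (closure nat Y s B) (proj1_sig (e x))
                         (closure_incl _ _ _ _ _ (ex_intro _ x eq_refl))).
      intros a b E. apply He, sig_ext. exact (f_equal (@proj1_sig _ _) E).
    + apply (card_le_trans _ ({y | B y} * nat)); [apply closure_card_le, card_le_refl|].
      apply (card_le_trans _ (X * nat)); [|apply infinite_card_le_prod_nat, HX].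
      apply card_le_prod; [apply card_le_image | apply card_le_refl].
  - intros y Cy. apply (closure_min nat Y s B (uncovered F)); auto.
    + intros z [x' <-]. apply (proj2_sig (e x')).
    + apply uncovered_invariant, F_inv.
  - apply closure_incl. exists x. reflexivity.
Qed.

Lemma solvable_upward : solvable A w Y s.
Proof.
  destruct (classic (exists S0, F S0)) as [[S0 FS0]|nF].
  2:{ exfalso. apply uncovered_not_ge. destruct XY as [f Hf].
      exists (fun x => exist (uncovered F) (f x) (fun S FS _ => nF (ex_intro _ S FS))).
      intros a b E. apply Hf. exact (f_equal (@proj1_sig _ _) E). }
  apply (solvable_of_extensions A w Y s F F_inv F_disj (fun _ => S0)); auto.
  intros S FS HS. apply (solvable_of_equipotent A w _ X _); [|exact HU].
  (* X ~ S <= extend S <= S + uncovered <= X + X <= X *)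
  destruct (F_good S FS) as [_ ES].
  apply card_le_antisym.
  - apply (card_le_trans _ _ _ (card_le_sig_or _ _ _)).
    apply (card_le_trans _ (X + X)); [|apply infinite_card_le_sum, HX].
    apply card_le_sum; [apply equipotent_card_le, ES|].
    apply (card_le_trans _ {y | uncovered F y}); [apply card_le_sig_incl; tauto|].
    destruct (card_le_total {y | uncovered F y} X) as [H|H]; [exact H|].
    exfalso. exact (uncovered_not_ge H).
  - apply (card_le_trans _ {y | S y}); [apply equipotent_card_le, equipotent_sym, ES|].
    apply card_le_sig_incl. intros y Sy. left. exact Sy.
Qed.
End Upward.

Theorem universal_sym_upward (X Y : Type) A (w : nat -> word A) :
  infinite X -> card_le X Y -> universal_sym X w -> universal_sym Y w.
Proof.
  intros HX XY HU. apply universal_symE. intro s.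
  destruct (maximal_disjoint_family Y (fun C => invariant s C /\ equipotent {y | C y} X))
    as [F [F1 [F2 F3]]].
  exact (solvable_upward X Y HX XY A w HU s F F1 F2 F3).
Qed.

(** * Absorbing copies of an orbit *)

Definition act_iso {T1 T2} (a1 : nat -> T1 -> T1) (a2 : nat -> T2 -> T2) : Prop :=
  exists b : T1 -> T2, Bijective b /\ forall n x, b (a1 n x) = a2 n (b x).

Lemma act_iso_refl {T} (a : nat -> T -> T) : act_iso a a.
Proof. exists (fun x => x). split; [exists (fun x => x)|]; auto. Qed.

Lemma act_iso_sym {T1 T2} (a1 : nat -> T1 -> T1) (a2 : nat -> T2 -> T2) :
  act_iso a1 a2 -> act_iso a2 a1.
Proof.
  intros [b [[b' [H1 H2]] H3]]. exists b'. split; [exists b; auto|].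
  intros n y. rewrite <- (H1 (b' (a2 n y))), <- (H1 (a1 n (b' y))), H2, H3, H2. reflexivity.
Qed.

Lemma act_iso_trans {T1 T2 T3} (a1 : nat -> T1 -> T1) (a2 : nat -> T2 -> T2)
  (a3 : nat -> T3 -> T3) : act_iso a1 a2 -> act_iso a2 a3 -> act_iso a1 a3.
Proof.
  intros [b [[b' [H1 H2]] H3]] [c [[c' [K1 K2]] K3]].
  exists (fun x => c (b x)). split; [exists (fun z => b' (c' z)); split|].
  - intro x. rewrite K1, H1. auto.
  - intro z. rewrite H2, K2. auto.
  - intros n x. rewrite H3, K3. auto.
Qed.

Definition sum_act {T1 T2} (a1 : nat -> T1 -> T1) (a2 : nat -> T2 -> T2) n (z : T1 + T2) :=
  match z with inl x => inl (a1 n x) | inr y => inr (a2 n y) end.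

Definition copies_act {N O} (r : nat -> O -> O) n (p : N * O) : N * O := (fst p, r n (snd p)).

Lemma act_iso_sum {T1 T2 U1 U2} (a1 : nat -> T1 -> T1) (a2 : nat -> T2 -> T2)
  (c1 : nat -> U1 -> U1) (c2 : nat -> U2 -> U2) :
  act_iso a1 c1 -> act_iso a2 c2 -> act_iso (sum_act a1 a2) (sum_act c1 c2).
Proof.
  intros [b [[b' [H1 H2]] H3]] [d [[d' [K1 K2]] K3]].
  exists (fun z => match z with inl x => inl (b x) | inr y => inr (d y) end).
  split; [exists (fun z => match z with inl x => inl (b' x) | inr y => inr (d' y) end); split|].
  - intros [x|y]; f_equal; auto.
  - intros [x|y]; f_equal; auto.
  - intros n [x|y]; simpl; f_equal; auto.
Qed.

Lemma act_iso_copies {N N' O} (r : nat -> O -> O) :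
  equipotent N N' -> act_iso (@copies_act N O r) (@copies_act N' O r).
Proof.
  intros [f [g [H1 H2]]]. exists (fun p => (f (fst p), snd p)).
  split; [exists (fun p => (g (fst p), snd p)); split|].
  - intros [a o]; simpl; rewrite H1; auto.
  - intros [a o]; simpl; rewrite H2; auto.
  - intros n [a o]; reflexivity.
Qed.

Lemma act_iso_sum_assoc {T1 T2 T3} (a1 : nat -> T1 -> T1) (a2 : nat -> T2 -> T2)
  (a3 : nat -> T3 -> T3) :
  act_iso (sum_act (sum_act a1 a2) a3) (sum_act a1 (sum_act a2 a3)).
Proof.
  exists (fun z => match z with inl (inl x) => inl x | inl (inr y) => inr (inl y)
                          | inr u => inr (inr u) end).
  split; [exists (fun z => match z with inl x => inl (inl x) | inr (inl y) => inl (inr y)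
                                  | inr (inr u) => inr u end); split|].
  - intros [[x|y]|u]; auto.
  - intros [x|[y|u]]; auto.
  - intros n [[x|y]|u]; auto.
Qed.

Lemma act_iso_copies_sum {N N' O} (r : nat -> O -> O) :
  act_iso (@copies_act (N + N') O r) (sum_act (@copies_act N O r) (@copies_act N' O r)).
Proof.
  exists (fun p => match fst p with inl a => inl (a, snd p) | inr b => inr (b, snd p) end).
  split; [exists (fun z => match z with inl (a, o) => (inl a, o) | inr (b, o) => (inr b, o) end);
          split|].
  - intros [[a|b] o]; auto.
  - intros [[a o]|[b o]]; auto.
  - intros n [[a|b] o]; auto.
Qed.

Lemma act_iso_absorb {M O J} (aM : nat -> M -> M) (r : nat -> O -> O) :
  card_le J nat ->
  act_iso (sum_act aM (@copies_act nat O r))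
          (sum_act (sum_act aM (@copies_act nat O r)) (@copies_act J O r)).
Proof.
  intros [e He].
  assert (NJ : equipotent nat (nat + J)).
  { apply card_le_antisym.
    - exists inl. intros a b E. injection E; auto.
    - exists (fun z => match z with inl n => 2 * n | inr j => S (2 * e j) end).
      intros [a|a] [b|b] E; try lia; f_equal; [lia | apply He; lia]. }
  apply (act_iso_trans _ (sum_act aM (@copies_act (nat + J) O r))).
  { apply act_iso_sum; [apply act_iso_refl | apply act_iso_copies, NJ]. }
  apply (act_iso_trans _ (sum_act aM (sum_act (@copies_act nat O r) (@copies_act J O r)))).
  { apply act_iso_sum; [apply act_iso_refl | apply act_iso_copies_sum]. }
  apply act_iso_sym, act_iso_sum_assoc.
Qed.

Section Absorbing.
Variables (A : Type) (w : nat -> word A) (Acnt : card_le A nat).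
Variables (Y : Type) (HY : infinite Y) (HU : universal_sym Y w).
Variables (P : Type) (s : nat -> Sym P) (Pcnt : card_le P nat) (x : nat -> P).
Hypothesis x_disj : forall k k', orbit nat P s (x k) (x k') -> k = k'.
Hypothesis x_type : forall k, same_type nat P s (x k) (x 0).

Notation ga := (fg_act nat P s).
Notation orb := (orbit nat P s).
Let act n (p : P) := sfun (s n) p.

Definition base_orbit := {o | orb (x 0) o}.
Definition base_orbit_sym n : Sym base_orbit :=
  restrict_sym s _ (orbit_invariant nat P s (x 0)) n.
Let act_base n (o : base_orbit) := sfun (base_orbit_sym n) o.

Definition off_orbits (y : P) : Prop := ~ exists k, orb (x k) y.

Lemma off_orbits_invariant : invariant s off_orbits.
Proof.
  intros n y Hy. split; intros [k Hk]; apply Hy; exists k;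
    refine (orbit_trans _ _ _ _ _ _ Hk (orbit_sym _ _ _ _ _ _));
    apply (orbit_invariant nat P s y), orbit_refl.
Qed.

Let act_off n (m : {y | off_orbits y}) := sfun (restrict_sym s _ off_orbits_invariant n) m.

(* P splits into the points off the orbits of the [x k] and countably many
   copies of the orbit of [x 0]. *)
Lemma orbit_decomposition : act_iso (sum_act act_off (@copies_act nat _ act_base)) act.
Proof.
  assert (Hc : forall o : base_orbit, exists g, proj1_sig o = ga g (x 0))
    by (intros [o [g Hg]]; exists g; exact Hg).
  destruct (choice _ Hc) as [code Hcode].
  exists (fun z => match z with inl m => proj1_sig m
                           | inr (k, o) => ga (code o) (x k) end).
  split; [apply bijective_of_inj_surj|].
  - intros [m|[k o]] [m'|[k' o']] E.
    + f_equal. apply sig_ext, E.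
    + exfalso. apply (proj2_sig m). exists k'. rewrite E. apply orbit_fg_act.
    + exfalso. apply (proj2_sig m'). exists k. rewrite <- E. apply orbit_fg_act.
    + assert (k = k') as <- by (apply x_disj; exact (orbit_meet _ _ _ _ _ _ _ E)).
      do 3 f_equal. apply sig_ext. rewrite !Hcode. apply (x_type k), E.
  - intro y. destruct (classic (exists k, orb (x k) y)) as [[k [g ->]]|nO].
    + exists (inr (k, exist _ (ga g (x 0)) (orbit_fg_act nat P s g (x 0)))).
      apply (x_type k). rewrite <- Hcode. reflexivity.
    + exists (inl (exist off_orbits y nO)). reflexivity.
  - intros n [m|[k o]]; [reflexivity|]. unfold act; simpl.
    change (sfun (s n) (ga (code o) (x k))) with (ga ((n, true) :: code o) (x k)).
    apply (x_type k). simpl. rewrite <- !Hcode. reflexivity.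
Qed.

Let Q := (P + Y * base_orbit)%type.
Let act_Q n : Sym Q := sum_sym (s n) (prod_sym (base_orbit_sym n)).
Let o0 : base_orbit := exist _ (x 0) (orbit_refl nat P s (x 0)).

Lemma ambient_equipotent : equipotent Q Y.
Proof.
  apply card_le_antisym.
  - apply (card_le_trans _ (Y + Y)); [|apply infinite_card_le_sum, HY].
    apply card_le_sum.
    + apply (card_le_trans _ _ _ Pcnt), infinite_card_le_nat, HY.
    + apply (card_le_trans _ (Y * nat)); [|apply infinite_card_le_prod_nat, HY].
      apply card_le_prod; [apply card_le_refl|].
      apply (card_le_trans _ _ _ (card_le_sig _ _) Pcnt).
  - exists (fun y => inr (y, o0)). intros a b E. injection E as E. exact E.
Qed.

Lemma copy_invariant (R : Q -> Prop) : invariant act_Q R ->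
  forall y o o', R (inr (y, o)) -> R (inr (y, o')).
Proof.
  intros HR y o o' Ro.
  assert (Hoo' : orb (proj1_sig o) (proj1_sig o'))
    by exact (orbit_trans _ _ _ _ _ _ (orbit_sym _ _ _ _ _ (proj2_sig o)) (proj2_sig o')).
  destruct Hoo' as [g Hg].
  replace o' with (fg_act nat _ base_orbit_sym g o).
  - apply (fg_act_preserves nat _ base_orbit_sym (fun o => R (inr (y, o)))); auto.
    intros n o1 Ro1. exact (HR n _ Ro1).
  - apply sig_ext. rewrite Hg. apply fg_act_restrict.
Qed.

Section AmbientSolution.
Variable f : A -> Sym Q.
Hypothesis Hf : forall n, word_eval A f (w n) = act_Q n.

Let Z := closure A Q f (fun q => exists p, inl p = q).

Lemma reached_invariant : invariant act_Q Z.
Proof.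
  intros n q Zq. rewrite <- (Hf n). apply word_eval_preserves; [apply closure_invariant | exact Zq].
Qed.

Let J := {y : Y | exists o, Z (inr (y, o))}.

Lemma reached_copies_countable : card_le J nat.
Proof.
  apply (card_le_trans _ {q | Z q}).
  - assert (Hj : forall j : J, Z (inr (proj1_sig j, o0)))
      by (intros [y [o Zo]]; exact (copy_invariant Z reached_invariant y o o0 Zo)).
    exists (fun j => exist Z _ (Hj j)).
    intros a b E. apply sig_ext. apply (f_equal (@proj1_sig _ _)) in E. injection E; auto.
  - apply (card_le_trans _ _ _ (closure_card_le A Q f _ Acnt)).
    apply (card_le_trans _ (nat * nat)); [|apply card_le_nat_prod_nat].
    apply card_le_prod; [|apply card_le_refl].
    apply (card_le_trans _ _ _ (card_le_image _ _ inl) Pcnt).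
Qed.

Let iota (z : P + J * base_orbit) : Q :=
  match z with inl p => inl p | inr (j, o) => inr (proj1_sig j, o) end.

Lemma iota_inj : Injective iota.
Proof.
  intros [p|[[y Hy] o]] [p'|[[y' Hy'] o']] E; simpl in E; try discriminate; injection E; intros.
  - subst. reflexivity.
  - subst. f_equal. f_equal. apply sig_ext. reflexivity.
Qed.

Lemma reached_iota q : Z q <-> exists z, q = iota z.
Proof.
  split.
  - destruct q as [p|[y o]]; intro Zq;
      [exists (inl p) | exists (inr (exist _ y (ex_intro _ o Zq), o))]; auto.
  - intros [[p|[[y [o' Zo']] o]] ->]; simpl.
    + apply closure_incl. exists p. auto.
    + exact (copy_invariant Z reached_invariant y o' o Zo').
Qed.

Lemma solvable_of_ambient_solution : solvable A w P s.
Proof.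
  (* P absorbs the J extra copies of the base orbit that the solution reaches. *)
  assert (Hiso : act_iso act (sum_act act (@copies_act J _ act_base))).
  { apply (act_iso_trans _ _ _ (act_iso_sym _ _ orbit_decomposition)).
    apply (act_iso_trans _ _ _ (act_iso_absorb act_off act_base reached_copies_countable)).
    apply act_iso_sum; [apply orbit_decomposition | apply act_iso_refl]. }
  destruct Hiso as [b [[b' [Hb Hb']] Hbact]].
  assert (i_inj : Injective (fun p => iota (b p))).
  { intros p p' E. rewrite <- (Hb p), <- (Hb p'). f_equal. apply iota_inj, E. }
  destruct (injective_left_inverse _ (inhabits (x 0)) i_inj) as [r Hr].
  apply (solvable_pullback A P Q f _ r Hr).
  - intros a p.
    assert (Zp : Z (iota (b p))) by (apply reached_iota; eauto).
    destruct (proj1 (reached_iota _) (proj1 (closure_invariant A Q f _ a _ Zp))) as [z1 E1].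
    destruct (proj1 (reached_iota _) (proj2 (closure_invariant A Q f _ a _ Zp))) as [z2 E2].
    split; [exists (b' z1) | exists (b' z2)]; rewrite Hb'; assumption.
  - intros n p. rewrite Hf. unfold act in Hbact. rewrite Hbact.
    destruct (b p) as [?|[? ?]]; reflexivity.
Qed.
End AmbientSolution.

Lemma solvable_absorbing : solvable A w P s.
Proof.
  pose proof (universal_sym_equipotent A w Q Y ambient_equipotent HU) as HUQ.
  destruct (proj1 (universal_symE A w Q) HUQ act_Q) as [f Hf].
  exact (solvable_of_ambient_solution f Hf).
Qed.
End Absorbing.

(** * Orbit types and transfer to smaller sets *)

Lemma card_le_cantor_prod_nat : card_le ((nat -> bool) * nat) (nat -> bool).
Proof.
  (* Row 0 of the grid [nat * nat] carries the function, row 1 the indicator of the number. *)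
  exists (fun p m => let q := Cantor.of_nat m in
    match fst q with 0 => fst p (snd q) | 1 => Nat.eqb (snd q) (snd p) | _ => false end).
  intros [f n] [f' n'] E.
  assert (E1 : forall j, f j = f' j).
  { intro j. pose proof (f_equal (fun h => h (Cantor.to_nat (0, j))) E) as H.
    cbv beta zeta in H. rewrite Cantor.cancel_of_to in H. exact H. }
  pose proof (f_equal (fun h => h (Cantor.to_nat (1, n))) E) as H. cbv beta zeta in H.
  rewrite Cantor.cancel_of_to in H. cbn [fst snd] in H. rewrite Nat.eqb_refl in H.
  symmetry in H. apply Nat.eqb_eq in H as ->.
  f_equal. apply functional_extensionality, E1.
Qed.

Lemma card_le_cantor_sum : card_le ((nat -> bool) + (nat -> bool)) (nat -> bool).
Proof.
  exists (fun z m => match m, z with 0, inl _ => false | 0, inr _ => true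
                              | S m, inl f => f m | S m, inr f => f m end).
  intros [f|f] [f'|f'] E;
    try (pose proof (f_equal (fun h => h 0) E); discriminate);
    f_equal; apply functional_extensionality; intro m; exact (f_equal (fun h => h (S m)) E).
Qed.

Lemma card_le_sig_fun {T U} (D : T -> Prop) (E : U -> Prop) :
  inhabited U -> card_le {a | D a} {b | E b} ->
  exists f : T -> U, (forall a, D a -> E (f a)) /\
                     (forall a a', D a -> D a' -> f a = f a' -> a = a').
Proof.
  intros [u0] [g Hg].
  exists (fun a => match excluded_middle_informative (D a) with
                   | left h => proj1_sig (g (exist _ a h)) | right _ => u0 end).
  split.
  - intros a Da. destruct (excluded_middle_informative (D a)); [apply proj2_sig | contradiction].
  - intros a a' Da Da'.
    destruct (excluded_middle_informative (D a)); [|contradiction].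
    destruct (excluded_middle_informative (D a')); [|contradiction].
    intro E'. apply sig_ext in E'. apply Hg in E'. exact (f_equal (@proj1_sig _ _) E').
Qed.

Lemma card_le_countable_family X (F : (X -> Prop) -> Prop) :
  (forall S T y, F S -> F T -> S y -> T y -> S = T) ->
  (forall S, F S -> card_le {y | S y} nat) ->
  card_le X ({S | F S} * nat + {y | uncovered F y}).
Proof.
  intros F_disj F_cnt.
  assert (He : forall S, exists e : X -> nat,
    F S -> forall y y', S y -> S y' -> e y = e y' -> y = y').
  { intro S. destruct (classic (F S)) as [FS|nFS]; [|exists (fun _ => 0); tauto].
    destruct (card_le_sig_fun S (fun _ : nat => True) (inhabits 0)) as [e [_ He]].
    - apply (card_le_trans _ _ _ (F_cnt S FS)). exists (fun n => exist _ n I).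
      intros a b E. exact (f_equal (@proj1_sig _ _) E).
    - exists e. auto. }
  destruct (choice _ He) as [e He'].
  assert (Hc : forall y, exists v : {S | F S} * nat + {y | uncovered F y},
    match v with inl (B, n) => proj1_sig B y /\ n = e (proj1_sig B) y
               | inr u => proj1_sig u = y end).
  { intro y. destruct (classic (uncovered F y)) as [Uy|Cy].
    - exists (inr (exist _ y Uy)). reflexivity.
    - destruct (not_uncovered F y Cy) as [S [FS Sy]]. exists (inl (exist _ S FS, e S y)). auto. }
  destruct (choice _ Hc) as [c Hc']. exists c. intros y y' E.
  pose proof (Hc' y) as Hy. pose proof (Hc' y') as Hy'. rewrite E in Hy.
  destruct (c y') as [[[S FS] n]|[u Uu]]; simpl in Hy, Hy'; [|congruence].
  destruct Hy as [Sy ->], Hy' as [Sy' E'].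
  exact (He' S FS y y' Sy Sy' E').
Qed.

Section OrbitTypes.
Variables (X : Type) (s : nat -> Sym X).
Notation ga := (fg_act nat X s).
Notation orb := (orbit nat X s).

Let pair_code (g g' : list (nat * bool)) : nat :=
  Cantor.to_nat (fg_code nat id g, fg_code nat id g').

Definition type_code (y : X) : nat -> bool := fun m =>
  if excluded_middle_informative (exists g g', pair_code g g' = m /\ ga g y = ga g' y)
  then true else false.

Lemma type_code_spec y g g' : type_code y (pair_code g g') = true <-> ga g y = ga g' y.
Proof.
  unfold type_code. destruct (excluded_middle_informative _) as [[h [h' [E Eh]]]|H].
  - apply Cantor.to_nat_inj in E. injection E as E1 E2.
    apply (fg_code_inj nat id (fun _ _ H => H)) in E1, E2. subst. tauto.
  - split; [discriminate | intro E; exfalso; apply H; exists g, g'; auto].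
Qed.

Lemma same_type_of_code a b : type_code a = type_code b -> same_type nat X s a b.
Proof. intros E g g'. rewrite <- !type_code_spec, E. reflexivity. Qed.

Definition orbit_rep (y : X) : X := epsilon (inhabits y) (orb y).

Lemma orbit_rep_in y : orb y (orbit_rep y).
Proof. apply (epsilon_spec (inhabits y) (orb y)). exists y. apply orbit_refl. Qed.

Lemma orbit_rep_eq y z : orb y = orb z -> orbit_rep y = orbit_rep z.
Proof.
  intro E. unfold orbit_rep. rewrite E. f_equal. apply proof_irrelevance.
Qed.

Lemma orbit_rep_orbit y : orb (orbit_rep y) = orb y.
Proof. apply orbit_eq, orbit_rep_in. Qed.

(* [type_code] is not constant on orbits, so an orbit is typed through its
   chosen representative. *)
Definition orbit_type (y : X) : nat -> bool := type_code (orbit_rep y).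

End OrbitTypes.

Section Downward.
Variables (X Y : Type) (HX : infinite X) (HCX : ~ card_le X (nat -> bool)) (XY : card_le X Y).
Variables (A : Type) (w : nat -> word A) (Acnt : card_le A nat) (HU : universal_sym Y w).
Variable s : nat -> Sym X.
Notation ga := (fg_act nat X s).
Notation orb := (orbit nat X s).

Let homogeneous (S : X -> Prop) :=
  invariant s S /\ card_le {y | S y} nat /\
  exists x : nat -> X, (forall k, S (x k)) /\ (forall k k', orb (x k) (x k') -> k = k') /\
                       (forall k, same_type nat X s (x k) (x 0)).

Variable F : (X -> Prop) -> Prop.
Hypothesis F_good : forall S, F S -> homogeneous S.
Hypothesis F_disj : forall S T y, F S -> F T -> S y -> T y -> S = T.
Hypothesis F_max : forall C, homogeneous C -> (forall y, C y -> uncovered F y) -> forall y, ~ C y.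

Let F_inv S (FS : F S) : invariant s S := proj1 (F_good S FS).
Let U := uncovered F.
Let U_inv : invariant s U := uncovered_invariant X s F F_inv.

Lemma uncovered_types_finite t :
  exists l : list (X -> Prop), forall y, U y -> orbit_type X s y = t -> In (orb y) l.
Proof.
  apply NNPP; intro Hn.
  destruct (infinite_sequence (X -> Prop)
    (fun O => exists y, U y /\ orbit_type X s y = t /\ O = orb y)) as [d [Hd HdD]].
  { intro l. apply NNPP; intro H1. apply Hn. exists l. intros y Uy Ty. apply NNPP; intro H2.
    apply H1. exists (orb y). split; [exists y|]; auto. }
  destruct (choice _ HdD) as [yk Hyk].
  set (xk := fun k => orbit_rep X s (yk k)).
  assert (orb_xk : forall k, orb (xk k) = d k).
  { intro k. destruct (Hyk k) as [_ [_ ->]]. apply orbit_rep_orbit. }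
  (* The representatives of infinitely many uncovered orbits of type [t] would
     generate a new homogeneous piece. *)
  apply (F_max (closure nat X s (fun z => exists k, xk k = z))) with (xk 0);
    [split; [|split]| |apply closure_incl; exists 0; reflexivity].
  - apply closure_invariant.
  - apply (card_le_trans _ _ _ (closure_card_le nat X s _ (card_le_refl nat))).
    apply (card_le_trans _ (nat * nat)); [|apply card_le_nat_prod_nat].
    apply card_le_prod; [apply card_le_image | apply card_le_refl].
  - exists xk. split; [|split].
    + intro k. apply closure_incl. exists k. reflexivity.
    + intros k k' H. apply Hd. rewrite <- !orb_xk. symmetry. apply orbit_eq, H.
    + intro k. apply same_type_of_code.
      destruct (Hyk k) as [_ [Tk _]], (Hyk 0) as [_ [T0 _]]. unfold orbit_type in Tk, T0.
      fold (xk k) in Tk. fold (xk 0) in T0. congruence.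
  - intros y Cy. change (U y). apply (closure_min nat X s _ U) in Cy; auto.
    intros z [k <-]. destruct (Hyk k) as [Uy _].
    destruct (orbit_rep_in X s (yk k)) as [g Hg]. unfold xk. rewrite Hg.
    apply (fg_act_preserves nat X s U U_inv), Uy.
Qed.

Lemma uncovered_card_le_cantor : card_le {y | U y} (nat -> bool).
Proof.
  destruct (choice _ uncovered_types_finite) as [L HL].
  assert (Hpos : forall y, exists p : nat * list (nat * bool), U y ->
     nth (fst p) (L (orbit_type X s y)) (fun _ => False) = orb y /\
     y = ga (snd p) (orbit_rep X s y)).
  { intro y. destruct (classic (U y)) as [Uy|nUy]; [|exists (0, []); tauto].
    destruct (In_nth _ _ (fun _ => False) (HL _ y Uy eq_refl)) as [i [_ Hi]].
    destruct (orbit_sym _ _ _ _ _ (orbit_rep_in X s y)) as [g Hg]. exists (i, g). auto. }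
  destruct (choice _ Hpos) as [pos Hpos'].
  refine (card_le_trans _ _ _ _ card_le_cantor_prod_nat).
  exists (fun z => let y := proj1_sig z in
    (orbit_type X s y, Cantor.to_nat (fst (pos y), fg_code nat id (snd (pos y))))).
  intros [a Ua] [b Ub] E. apply sig_ext. cbv beta zeta in E. cbn [proj1_sig] in E |- *.
  pose proof (f_equal fst E) as E1. apply (f_equal snd) in E as E2. cbn [fst snd] in E2.
  apply Cantor.to_nat_inj in E2.
  pose proof (f_equal snd E2) as E3. apply (f_equal fst) in E2. cbn [fst snd] in E1, E2, E3.
  apply (fg_code_inj nat id (fun _ _ H => H)) in E3.
  destruct (Hpos' a Ua) as [Na Ya], (Hpos' b Ub) as [Nb Yb].
  rewrite E1, E2, Nb in Na.
  rewrite Ya, Yb, E3, (orbit_rep_eq X s b a Na). reflexivity.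
Qed.

Lemma family_not_le_cantor : ~ card_le {S | F S} (nat -> bool).
Proof.
  intro HF. apply HCX.
  apply (card_le_trans _ _ _
    (card_le_countable_family X F F_disj (fun S FS => proj1 (proj2 (F_good S FS))))).
  refine (card_le_trans _ _ _ _ card_le_cantor_sum).
  apply card_le_sum; [|exact uncovered_card_le_cantor].
  refine (card_le_trans _ _ _ _ card_le_cantor_prod_nat).
  apply card_le_prod; [exact HF | apply card_le_refl].
Qed.

(* Since there are more members of F than uncovered orbits, every uncovered
   orbit can be attached to its own member of F. *)
Lemma uncovered_orbits_attach : exists tgt : (X -> Prop) -> (X -> Prop),
  (forall y, U y -> F (tgt (orb y))) /\
  (forall y y', U y -> U y' -> tgt (orb y) = tgt (orb y') -> orb y = orb y').
Proof.
  set (D := fun O : X -> Prop => exists y, U y /\ O = orb y).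
  assert (DU : card_le {O | D O} {y | U y}).
  { assert (Hc : forall O : {O | D O}, exists y : {y | U y}, proj1_sig O = orb (proj1_sig y))
      by (intros [O [y [Uy ->]]]; exists (exist _ y Uy); reflexivity).
    destruct (choice _ Hc) as [c Hc']. exists c. intros a b E. apply sig_ext.
    rewrite Hc', (Hc' b), E. reflexivity. }
  destruct (card_le_total {O | D O} {S | F S}) as [DF|FD].
  - destruct (card_le_sig_fun D F (inhabits (fun _ => False)) DF) as [tgt [H1 H2]].
    exists tgt. split; [intros y Uy; apply H1; exists y; auto|].
    intros y y' Uy Uy'. apply H2; [exists y | exists y']; auto.
  - exfalso. apply family_not_le_cantor.
    exact (card_le_trans _ _ _ FD (card_le_trans _ _ _ DU uncovered_card_le_cantor)).
Qed.

Lemma solvable_downward : solvable A w X s.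
Proof.
  destruct uncovered_orbits_attach as [tgt [tgt_F tgt_inj]].
  assert (orb_s : forall n y, orb (sfun (s n) y) = orb y).
  { intros n y. apply orbit_eq.
    exact (invariant_sfun (orbit_invariant nat X s y) n y (orbit_refl _ _ _ y)). }
  apply (solvable_of_extensions A w X s F F_inv F_disj (fun y => tgt (orb y)) tgt_F).
  { intros n y. rewrite orb_s. reflexivity. }
  intros S FS HS.
  destruct (F_good S FS) as [_ [S_cnt [x [Sx [x_disj x_type]]]]].
  refine (solvable_absorbing A w Acnt Y (infinite_card_le X Y XY HX) HU _ _ _
           (fun k => exist _ (x k) (or_introl (Sx k))) _ _).
  - apply (card_le_trans _ _ _ (card_le_sig_or _ _ _)).
    refine (card_le_trans _ _ _ _ card_le_nat_sum_nat). apply card_le_sum; [exact S_cnt|].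
    (* The uncovered points attached to S form a single orbit. *)
    destruct (classic (exists y0, U y0 /\ tgt (orb y0) = S)) as [[y0 [Uy0 Ty0]]|nE].
    + apply (card_le_trans _ {z | orb y0 z}); [|apply orbit_card_le, card_le_refl].
      apply card_le_sig_incl. intros y [Uy Ty].
      rewrite (tgt_inj y0 y Uy0 Uy); [apply orbit_refl | congruence].
    + exists (fun _ => 0). intros [a Ha]. exfalso. apply nE. exists a. exact Ha.
  - intros k k' H. apply x_disj, (orbit_restrict _ _ _ _ _ _ _ H).
  - intro k. apply same_type_restrict, x_type.
Qed.
End Downward.

Theorem universal_sym_downward (X Y : Type) A (w : nat -> word A) :
  infinite X -> card_lt (nat -> bool) X -> card_le X Y -> countable A ->
  universal_sym Y w -> universal_sym X w.
Proof.
  intros HX [_ HCX] XY Acnt HU. apply universal_symE. intro s.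
  destruct (maximal_disjoint_family X (fun S => invariant s S /\ card_le {y | S y} nat /\
    exists x : nat -> X, (forall k, S (x k)) /\
      (forall k k', orbit nat X s (x k) (x k') -> k = k') /\
      (forall k, same_type nat X s (x k) (x 0)))) as [F [F1 [F2 F3]]].
  exact (solvable_downward X Y HX HCX XY A w Acnt HU s F F1 F2 F3).
Qed.

Theorem corollary2p2 :
  (forall (X Y : Type), infinite X -> infinite Y -> card_lt X Y ->
     (forall (A : Type) (w : nat -> word A), countable A ->
        universal_sym X w -> universal_sym Y w) /\
     (card_lt (nat -> bool) X ->
        forall (A : Type) (w : nat -> word A), countable A ->
        universal_sym Y w -> universal_sym X w)) /\
  (forall (X Y : Type), infinite X -> infinite Y ->
     card_lt (nat -> bool) X -> card_le X Y ->
     forall (A : Type) (w : nat -> word A), countable A ->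
       (universal_sym X w <-> universal_sym Y w)).
Proof.
  split.
  - intros X Y HX _ [XY _]. split.
    + intros A w _. apply universal_sym_upward; assumption.
    + intros HC A w Acnt. apply universal_sym_downward; assumption.
  - intros X Y HX _ HC XY A w Acnt. split.
    + apply universal_sym_upward; assumption.
    + apply universal_sym_downward; assumption.
Qed.
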